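(* Let $A$ be a finite weighted Büchi automaton (WBA) and $c\in\mathbb{N}$. Then $A$ admits a Büchi accepted $c$-feasible infinite run if and only if $A$ admits a Büchi accepted $c$-feasible lasso, i.e. an infinite run of the form $\gamma_1\gamma_2^\omega$ where $\gamma_1,\gamma_2$ are finite runs, $\gamma_2$ is nonempty and starts and ends in the same state (the last state of $\gamma_1$), and $\gamma_2^\omega$ denotes the infinite repetition of $\gamma_2$.
   Context: A weighted (transition-based, generalized) Büchi automaton (WBA) is a structure $A=(\Sigma,\mathcal{M},S,s_0,T)$ where $\Sigma$ is a finite alphabet, $\mathcal{M}$ is a finite set of colors, $S$ is a set of states with initial state $s_0\in S$, and $T\subseteq S\times\Sigma\times 2^{\mathcal{M}}\times\mathbb{R}\times S$ is a set of transitions; a transition $(s,\ell,M,w,s')$ has letter $\ell$, color set $M$ and weight $w$. $A$ is finite if $S$ and $T$ are finite and $T\subseteq S\times\Sigma\times 2^{\mathcal{M}}\times\mathbb{Z}\times S$ (integer weights). A run is a finite or infinite sequence of transitions $s_1\to s_2\to\cdots$ in which each transition starts in the state where the previous one ends. A weak upper bound $b\in\mathbb{N}$ is fixed throughout. For an initial credit $c$ and a run $s_1\xrightarrow{w_1}s_2\xrightarrow{w_2}\cdots$, the accumulated weights are $e_1=\min(b,c)$ and $e_{i+1}=\min(b,e_i+w_i)$; the run is $c$-feasible (i.e. $(c,b)$-feasible) if $e_i\ge 0$ for all $i$. An infinite run $s_1\to_{M_1}s_2\to_{M_2}\cdots$ is Büchi accepted if every color $m\in\mathcal{M}$ lies in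 $M_j$ for infinitely many $j$. *)

From HB Require Import structures.
From Stdlib Require List.
From mathcomp Require Import all_boot all_order all_algebra.
Set Implicit Arguments. Unset Strict Implicit. Unset Printing Implicit Defensive.
Import Order.TTheory GRing.Theory Num.Theory.
Local Open Scope ring_scope.

Record transition (Sigma Col state : finType) := Trans {
  tr_src : state;
  tr_lab : Sigma;
  tr_col : {set Col};
  tr_w   : int;
  tr_dst : state }.

Record WBA (Sigma Col : finType) := MkWBA {
  state : finType;
  s0 : state;
  trans : seq (transition Sigma Col state) }.

Section Runs.
Variables (Sigma Col : finType) (A : WBA Sigma Col).
Local Notation tr := (transition Sigma Col (state A)).

Definition is_trans (t : tr) : Prop := List.In t (trans A).

Fixpoint is_fin_run (g : seq tr) : Prop :=
  match g with
  | [::] => True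
  | t :: g' => is_trans t /\
      match g' with
      | [::] => True
      | t' :: _ => tr_dst t = tr_src t' /\ is_fin_run g'
      end
  end.

Definition is_inf_run (r : nat -> tr) : Prop :=
  forall i, is_trans (r i) /\ tr_dst (r i) = tr_src (r i.+1).

Fixpoint energy (b : nat) (c : int) (r : nat -> tr) (i : nat) : int :=
  match i with
  | 0 => Num.min (b%:Z) c
  | i'.+1 => Num.min (b%:Z) (energy b c r i' + tr_w (r i'))
  end.

Definition feasible (b : nat) (c : int) (r : nat -> tr) : Prop :=
  forall i, 0 <= energy b c r i.

Definition buchi_accepted (r : nat -> tr) : Prop :=
  forall m : Col, forall N : nat, exists j, (N <= j)%N /\ m \in tr_col (r j).

(* the infinite sequence g1 g2^omega, where g2 = t :: g2' is nonempty *)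
Definition lasso (g1 : seq tr) (t : tr) (g2' : seq tr) : nat -> tr :=
  fun i => if (i < size g1)%N then nth t g1 i
           else nth t (t :: g2') ((i - size g1) %% (size g2').+1).

Definition is_lasso (g1 : seq tr) (t : tr) (g2' : seq tr) : Prop :=
  is_fin_run g1 /\ is_fin_run (t :: g2') /\
  tr_dst (last t g2') = tr_src t /\
  (forall (t1 : tr) g1', g1 = t1 :: g1' -> tr_dst (last t1 g1') = tr_src t).

End Runs.

Arguments is_inf_run {Sigma Col} A r.
Arguments is_lasso {Sigma Col} A g1 t g2'.

From Pilot Require Import Defs.
From HB Require Import structures.
From mathcomp Require Import all_boot all_order all_algebra.
From mathcomp Require Import zify.
Set Implicit Arguments. Unset Strict Implicit. Unset Printing Implicit Defensive.
Import Order.TTheory GRing.Theory Num.Theory.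
Local Open Scope ring_scope.

(* A feasible run keeps its energy in [0, b], so the configuration
   (source state, energy) at any time ranges over a finite set.  Cut the run
   into consecutive windows each of which sees every color; among the
   configurations at the window boundaries two coincide, at times i < j.
   Since the energy at time n+1 depends only on the energy at time n and the
   n-th transition, the lasso r[0,i) r[i,j)^omega has the same energies as r
   modulo the period, so it is feasible, and it is accepted because r[i,j)
   contains a whole window. *)

Definition lasso_pos (i L n : nat) : nat :=
  if (n < i)%N then n else (i + (n - i) %% L)%N.

Section NatArith.
Local Open Scope nat_scope.

Lemma lasso_pos_small i L n : n < i + L -> lasso_pos i L n = n.
Proof.
move=> lt_n; rewrite /lasso_pos; case: ltnP => // le_in.
by rewrite modn_small; lia.
Qed.

Lemma lasso_pos_addmul i L n k :
  i <= n -> lasso_pos i L (n + k * L) = lasso_pos i L n.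
Proof.
rewrite /lasso_pos => le_in.
rewrite !ltnNge le_in (leq_trans le_in (leq_addr _ _)) /=.
by rewrite -addnBAC // [_ + k * L]addnC modnMDl.
Qed.

Lemma lasso_posS i l n :
  lasso_pos i l.+1 n.+1 =
  if lasso_pos i l.+1 n == i + l then i else (lasso_pos i l.+1 n).+1.
Proof.
rewrite /lasso_pos; case: (ltnP n i) => [lt_ni | le_in].
  rewrite ifN_eq; last lia.
  case: ifP => // /negbT; rewrite -leqNgt => le_in1.
  have -> : n.+1 = i by lia.
  by rewrite subnn mod0n addn0.
rewrite ltnNge (leqW le_in) /= subSn // -addn1 -modnDml addn1 eqn_add2l.
have := ltn_pmod (n - i) (ltn0Sn l).
case: eqP => [-> _ | neq_l lt_mod]; first by rewrite modnn addn0.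
by rewrite modn_small ?addnS //; lia.
Qed.

Lemma pigeonhole_nat (T : finType) (f : nat -> T) :
  exists x y, x < y /\ f x = f y.
Proof.
pose g (x : 'I_#|T|.+1) := f x.
have /injectivePn[x [y neq_xy eq_g]] : ~~ injectiveb g.
  by apply/injectiveP => /leq_card; rewrite card_ord ltnn.
case: (ltngtP x y) => [lt_xy | lt_yx | /val_inj eq_xy].
- by exists x, y.
- by exists y, x.
- by rewrite eq_xy eqxx in neq_xy.
Qed.

End NatArith.

Section RunToLasso.
Variables (Sigma Col : finType) (A : WBA Sigma Col).
Local Notation tr := (transition Sigma Col (state A)).
Implicit Types (r : nat -> tr).

Lemma energy_le_bound b c r n : energy b c r n <= b%:Z.
Proof. by case: n => [|n] /=; rewrite ge_min lexx. Qed.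

(* A feasible energy lies in [0, b], hence is determined by its level. *)
Definition energy_level b c r n : 'I_b.+1 := inord `|energy b c r n|%N.

Lemma energy_level_inj b c r m n : feasible b c r ->
  energy_level b c r m = energy_level b c r n -> energy b c r m = energy b c r n.
Proof.
move=> feas /(congr1 val).
have lt_level k : (`|energy b c r k|%N < b.+1)%N.
  by rewrite ltnS -lez_nat gez0_abs ?feas ?energy_le_bound.
by rewrite /= !inordK // => eq_abs; rewrite -(gez0_abs (feas m)) eq_abs gez0_abs.
Qed.

Definition window_covers r (N M : nat) : bool :=
  [forall m : Col, has (fun k => m \in Defs.tr_col (r k)) (index_iota N M)].

Lemma window_coversP r N M :
  reflect (forall m : Col, exists2 k, (N <= k < M)%N & m \in Defs.tr_col (r k))
          (window_covers r N M).
Proof.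
apply: (iffP forallP) => [cover m | cover m].
  by have /hasP[k] := cover m; rewrite mem_index_iota; exists k.
by have [k] := cover m; rewrite -mem_index_iota => ? ?; apply/hasP; exists k.
Qed.

Lemma window_covers_widen r N M M' :
  (M <= M')%N -> window_covers r N M -> window_covers r N M'.
Proof.
move=> le_MM' /window_coversP cover; apply/window_coversP => m.
by have [k /andP[le_Nk lt_kM] col_k] := cover m; exists k => //; lia.
Qed.

Lemma is_fin_run_iota r s n : is_inf_run A r -> is_fin_run (map r (iota s n)).
Proof.
move=> run; elim: n s => [|[|n] IH] s //=; first by split; [exact: (run s).1|].
by split; [exact: (run s).1 | split; [exact: (run s).2 | exact: IH]].
Qed.

Lemma last_map_iota {T : Type} (r : nat -> T) s n :
  last (r s) (map r (iota s.+1 n)) = r (s + n)%N.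
Proof. by elim: n s => [|n IH] s /=; rewrite ?addn0 // IH addSnnS. Qed.

Definition run_lasso r (i l : nat) : nat -> tr :=
  lasso (map r (iota 0 i)) (r i) (map r (iota i.+1 l)).

Lemma run_lassoE r i l n : run_lasso r i l n = r (lasso_pos i l.+1 n).
Proof.
rewrite /run_lasso /lasso /lasso_pos !size_map !size_iota.
case: ltnP => [lt_ni | _]; first by rewrite (nth_map 0%N) ?size_iota ?nth_iota.
rewrite -[r i :: _]/(map r (iota i l.+1)).
by rewrite (nth_map 0%N) ?size_iota ?nth_iota ?ltn_pmod.
Qed.

Section Repeat.
Variables (r : nat -> tr) (i l : nat).
Hypotheses (r_run : is_inf_run A r) (src_rep : tr_src (r i) = tr_src (r (i + l.+1))).

Lemma is_lasso_run_lasso :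
  is_lasso A (map r (iota 0 i)) (r i) (map r (iota i.+1 l)).
Proof.
split; first exact: is_fin_run_iota.
split; first exact: (is_fin_run_iota i l.+1 r_run).
split; first by rewrite last_map_iota src_rep addnS; exact: (r_run _).2.
case: i src_rep => [|i'] // _ t1 g1' [<- <-].
by rewrite (last_map_iota r 0) add0n; exact: (r_run _).2.
Qed.

Lemma is_inf_run_lasso : is_inf_run A (run_lasso r i l).
Proof.
move=> n; rewrite !run_lassoE lasso_posS; split; first exact: (r_run _).1.
case: eqP => [-> | _]; last exact: (r_run _).2.
by rewrite src_rep addnS; exact: (r_run _).2.
Qed.

End Repeat.

Lemma energy_run_lasso b c r i l n :
  energy b c r i = energy b c r (i + l.+1) ->
  energy b c (run_lasso r i l) n = energy b c r (lasso_pos i l.+1 n).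
Proof.
move=> energy_rep; elim: n => [|n IH]; first by rewrite lasso_pos_small ?addnS.
rewrite /= IH run_lassoE lasso_posS; case: eqP => [-> | _] //.
by rewrite energy_rep addnS.
Qed.

Lemma buchi_accepted_run_lasso r i l :
  window_covers r i (i + l.+1) -> buchi_accepted (run_lasso r i l).
Proof.
move=> /window_coversP cover m N.
have [k /andP[le_ik lt_k] col_k] := cover m.
exists (k + N * l.+1)%N; split; first by rewrite mulnS; lia.
by rewrite run_lassoE lasso_pos_addmul // lasso_pos_small.
Qed.

Lemma lasso_of_repeat b c r i j :
  is_inf_run A r -> feasible b c r -> (i < j)%N ->
  tr_src (r i) = tr_src (r j) -> energy b c r i = energy b c r j ->
  window_covers r i j ->
  exists g1 t g2', is_lasso A g1 t g2' /\ is_inf_run A (lasso g1 t g2') /\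
    feasible b c (lasso g1 t g2') /\ buchi_accepted (lasso g1 t g2').
Proof.
move=> run feas lt_ij; set l := (j - i.+1)%N; have -> : j = (i + l.+1)%N by lia.
move=> src_rep energy_rep cover.
exists (map r (iota 0 i)), (r i), (map r (iota i.+1 l)); rewrite -/(run_lasso r i l).
split; first exact: is_lasso_run_lasso.
split; first exact: is_inf_run_lasso.
split; last exact: buchi_accepted_run_lasso.
by move=> n; rewrite energy_run_lasso.
Qed.

Section Checkpoints.
Variable r : nat -> tr.
Hypothesis r_accepted : buchi_accepted r.

Lemma exists_window_covers N : exists M, (N < M)%N && window_covers r N M.
Proof.
have [f f_spec] := fin_all_exists (fun m => r_accepted m N).
exists (N.+1 + \max_m f m)%N; apply/andP; split; first lia.
apply/window_coversP => m; have [le_Nf col_f] := f_spec m.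
by exists (f m) => //; have := @leq_bigmax _ f m; lia.
Qed.

Definition checkpoint (k : nat) : nat :=
  iter k (fun N => xchoose (exists_window_covers N)) 0.

Lemma checkpointS k :
  (checkpoint k < checkpoint k.+1)%N &&
  window_covers r (checkpoint k) (checkpoint k.+1).
Proof. exact: (xchooseP (exists_window_covers (checkpoint k))). Qed.

Lemma checkpoint_window x y : (x < y)%N ->
  (checkpoint x < checkpoint y)%N /\ window_covers r (checkpoint x) (checkpoint y).
Proof.
move=> lt_xy; have /andP[lt_x1 cover_x] := checkpointS x.
have le_chk : (checkpoint x.+1 <= checkpoint y)%N.
  apply: (homo_leq leqnn leq_trans _ lt_xy) => k.
  by have /andP[/ltnW] := checkpointS k.
split; first exact: leq_trans lt_x1 le_chk.
exact: window_covers_widen le_chk cover_x.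
Qed.

End Checkpoints.

End RunToLasso.

Theorem lemma2 (Sigma Col : finType) (A : WBA Sigma Col) (b c : nat) :
  (exists r : nat -> transition Sigma Col (state A),
      is_inf_run A r /\ feasible b c%:Z r /\ buchi_accepted r)
  <->
  (exists (g1 : seq (transition Sigma Col (state A)))
          (t : transition Sigma Col (state A)) (g2' : seq (transition Sigma Col (state A))),
      is_lasso A g1 t g2' /\ is_inf_run A (lasso g1 t g2') /\
      feasible b c%:Z (lasso g1 t g2') /\ buchi_accepted (lasso g1 t g2')).
Proof.
split=> [[r [run [feas acc]]] | [g1 [t [g2' [_ lasso_ok]]]]]; last first.
  by exists (lasso g1 t g2').
pose config k := (tr_src (r (checkpoint acc k)),
                  energy_level b c%:Z r (checkpoint acc k)).
have [x [y [lt_xy [src_rep level_rep]]]] := pigeonhole_nat config.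
have [lt_chk cover] := checkpoint_window acc lt_xy.
exact: lasso_of_repeat run feas lt_chk src_rep
         (energy_level_inj feas level_rep) cover.
Qed.
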